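(* Define, for $u\geq0$, $$\mathcal{J}_\alpha(u)=\begin{cases}\frac{1}{\alpha(\alpha-1)}\Big(\big(1-\frac{1-\alpha}{4\alpha}u\big)_+^\alpha-1\Big)&\alpha\in(0,\tfrac12),\\[3pt]\frac{1}{\alpha(\alpha-1)}\Big(\big(1-\frac{1-\alpha}{2}u\big)_+^\alpha-1\Big)&\alpha\in[\tfrac12,1),\end{cases}$$ $$\mathcal{J}^\flat_\alpha(u)=\begin{cases}\frac{1}{\alpha(\alpha-1)}\Big[\big(1-\frac{(1-\alpha)^2}{2\alpha}u\big)_+^{\frac{\alpha}{2(1-\alpha)}}-1\Big]&\alpha\in(0,\tfrac12),\\[3pt]\frac{1}{\alpha(\alpha-1)}\Big[\big(1-(1-\alpha)^2u\big)_+^{\frac{\alpha}{2(1-\alpha)}}-1\Big]&\alpha\in[\tfrac12,1),\end{cases}$$ where $(s)_+=\max\{s,0\}$. Then for all $\tfrac12\leq\alpha<1$, $\mathcal{J}^\flat_\alpha(u)\leq\mathcal{J}_\alpha(u)$ for all $u\geq0$; and for all $0<\alpha<\tfrac12$, $\mathcal{J}_\alpha(u)\leq\mathcal{J}^\flat_\alpha(u)$ for all $u\geq0$. *)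

(* R : realType, real powers via powR (`^),
   with the convention 0 `^ a = 0 for a <> 0. *)
From HB Require Import structures.
From mathcomp Require Import all_boot all_order all_algebra.
From mathcomp Require Import all_classical all_reals all_analysis.
Set Implicit Arguments. Unset Strict Implicit. Unset Printing Implicit Defensive.
Import Order.TTheory GRing.Theory Num.Theory.
Local Open Scope ring_scope.

Definition pospart {R : realType} (s : R) : R := Num.max s 0.

Definition Jalpha {R : realType} (alpha u : R) : R :=
  if alpha < 2^-1 then
    (alpha * (alpha - 1))^-1 *
      (pospart (1 - (1 - alpha) / (4 * alpha) * u) `^ alpha - 1)
  else
    (alpha * (alpha - 1))^-1 *
      (pospart (1 - (1 - alpha) / 2 * u) `^ alpha - 1).

Definition Jflat {R : realType} (alpha u : R) : R :=
  if alpha < 2^-1 then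
    (alpha * (alpha - 1))^-1 *
      (pospart (1 - (1 - alpha) ^+ 2 / (2 * alpha) * u)
         `^ (alpha / (2 * (1 - alpha))) - 1)
  else
    (alpha * (alpha - 1))^-1 *
      (pospart (1 - (1 - alpha) ^+ 2 * u)
         `^ (alpha / (2 * (1 - alpha))) - 1).

(* Put p := 1 / (2 (1 - alpha)).  The exponent of J^flat is p * alpha, and the
   coefficient of u in J_alpha is p times the one in J^flat, so with
   f(s) := (s^alpha - 1) / (alpha (alpha - 1)) the two functions are
   f ((1 - p x)_+) and f (((1 - x)_+)^p) for a suitable x.  Since f is
   nonincreasing on [0, +oo), the claim reduces to Bernoulli's inequality
   (1 - x)_+^p >= (1 - p x)_+ for p >= 1 (alpha >= 1/2), reversed for
   p <= 1 (alpha <= 1/2); in particular it holds for every real u. *)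
From HB Require Import structures.
From mathcomp Require Import all_boot all_order all_algebra.
From mathcomp Require Import all_classical all_reals all_analysis.
From mathcomp Require Import ring lra.
Import Order.TTheory GRing.Theory Num.Theory.
Local Open Scope ring_scope.

Section Bernoulli.
Variable R : realType.
Implicit Types p x y : R.

(* Young's inequality for [y * 1] with the conjugate exponents [p] and [p / (p - 1)]. *)
Lemma bernoulli_ge1_powR p y : 1 <= p -> 0 <= y -> 1 + p * (y - 1) <= y `^ p.
Proof.
move=> p_ge1 y_ge0; have [->|p_neq1] := eqVneq p 1.
  by rewrite powRr1 // mul1r; lra.
have p_gt1 : 1 < p by rewrite lt_neqAle eq_sym p_neq1.
have p_gt0 : 0 < p by apply: lt_trans p_gt1.
have p_neq0 : p != 0 by rewrite gt_eqF.
have p1_neq0 : p - 1 != 0 by rewrite subr_eq0 gt_eqF.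
have q_gt0 : 0 < p / (p - 1) by apply: divr_gt0; lra.
have conj_pq : p^-1 + (p / (p - 1))^-1 = 1 by field; rewrite p_neq0 p1_neq0.
have := conjugate_powR y_ge0 ler01 p_gt0 q_gt0 conj_pq.
rewrite powR1 mulr1 -(ler_pM2l p_gt0).
have -> : p * (y `^ p / p + 1 / (p / (p - 1))) = y `^ p + (p - 1).
  by field; rewrite p_neq0 p1_neq0.
lra.
Qed.

(* The convex case applied to [y `^ p] with the exponent [p^-1 >= 1]. *)
Lemma bernoulli_le1_powR p y : 0 < p -> p <= 1 -> 0 <= y ->
  y `^ p <= 1 + p * (y - 1).
Proof.
move=> p_gt0 p_le1 y_ge0.
have ip_ge1 : 1 <= p^-1 by rewrite -[leLHS]invr1 lef_pV2 ?posrE.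
have := bernoulli_ge1_powR p^-1 (y `^ p) ip_ge1 (powR_ge0 _ _).
rewrite -powRrM mulfV ?gt_eqF // powRr1 // -(ler_pM2l p_gt0).
by rewrite mulrDr mulr1 mulrA mulfV ?gt_eqF // mul1r; lra.
Qed.

Lemma pospart_ge0 x : 0 <= pospart x.
Proof. by rewrite /pospart le_max lexx orbT. Qed.

Lemma ler_pospart x : x <= pospart x.
Proof. by rewrite /pospart le_max lexx. Qed.

Lemma ler0_pospart x : x <= 0 -> pospart x = 0.
Proof. by move=> x_le0; apply/max_idPr. Qed.

Lemma ger0_pospart x : 0 <= x -> pospart x = x.
Proof. by move=> x_ge0; apply/max_idPl. Qed.

Lemma pospart_le_powR p x : 1 <= p -> pospart (1 - p * x) <= pospart (1 - x) `^ p.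
Proof.
move=> p_ge1; have [x_ge1|x_lt1] := leP 1 x.
  have -> : pospart (1 - x) = 0 by apply: ler0_pospart; lra.
  rewrite powR0 ?ler0_pospart //; first nra.
  by rewrite gt_eqF //; lra.
rewrite [pospart (1 - x)]ger0_pospart; last lra.
rewrite /pospart ge_max powR_ge0 andbT.
have := bernoulli_ge1_powR p (1 - x) p_ge1; lra.
Qed.

Lemma powR_le_pospart p x : 0 < p -> p <= 1 ->
  pospart (1 - x) `^ p <= pospart (1 - p * x).
Proof.
move=> p_gt0 p_le1; have [x_ge1|x_lt1] := leP 1 x.
  have -> : pospart (1 - x) = 0 by apply: ler0_pospart; lra.
  by rewrite powR0 ?gt_eqF ?pospart_ge0.
rewrite [pospart (1 - x)]ger0_pospart; last lra.
apply: le_trans (ler_pospart _).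
have := bernoulli_le1_powR p (1 - x) p_gt0 p_le1; lra.
Qed.

End Bernoulli.

Definition falpha {R : realType} (a s : R) : R := (a * (a - 1))^-1 * (s `^ a - 1).

Section Comparison.
Variable R : realType.
Implicit Types a u x y : R.

Lemma falpha_antitone a x y : 0 < a < 1 -> 0 <= x -> x <= y ->
  falpha a y <= falpha a x.
Proof.
move=> /andP[a_gt0 a_lt1] x_ge0 x_le_y.
apply: ler_wnM2l; last rewrite lerD2r.
- by rewrite invr_le0 pmulr_rle0 //; lra.
- apply: (ge0_ler_powR (ltW a_gt0)); rewrite ?nnegrE //.
  exact: le_trans x_le_y.
Qed.

Lemma Jflat_le_Jalpha a u : 2^-1 <= a -> a < 1 -> Jflat a u <= Jalpha a u.
Proof.
move=> a_ge a_lt1; rewrite /Jflat /Jalpha ltNge a_ge /=.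
set p := (2 * (1 - a))^-1.
have p_ge1 : 1 <= p by rewrite /p -[leLHS]invr1 lef_pV2 ?posrE; lra.
have a1_neq0 : 1 - a != 0 by rewrite subr_eq0 gt_eqF.
rewrite [a / _]mulrC powRrM; apply: falpha_antitone; rewrite ?pospart_ge0 //.
  by apply/andP; split; lra.
have -> : (1 - a) / 2 * u = p * ((1 - a) ^+ 2 * u) by rewrite /p; field.
exact: pospart_le_powR.
Qed.

Lemma Jalpha_le_Jflat a u : 0 < a -> a < 2^-1 -> Jalpha a u <= Jflat a u.
Proof.
move=> a_gt0 a_lt; rewrite /Jflat /Jalpha a_lt.
set p := (2 * (1 - a))^-1.
have p_gt0 : 0 < p by rewrite invr_gt0; lra.
have p_le1 : p <= 1 by rewrite /p -[leRHS]invr1 lef_pV2 ?posrE; lra.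
have a1_neq0 : 1 - a != 0 by rewrite subr_eq0 gt_eqF //; lra.
rewrite [a / _]mulrC powRrM; apply: falpha_antitone; rewrite ?powR_ge0 //.
  by apply/andP; split; lra.
have -> : (1 - a) / (4 * a) * u = p * ((1 - a) ^+ 2 / (2 * a) * u).
  by rewrite /p; field; rewrite a1_neq0 gt_eqF.
exact: powR_le_pospart.
Qed.

End Comparison.

Theorem lemmaB1 (R : realType) :
  (forall alpha : R, 2^-1 <= alpha -> alpha < 1 ->
     forall u : R, 0 <= u -> Jflat alpha u <= Jalpha alpha u) /\
  (forall alpha : R, 0 < alpha -> alpha < 2^-1 ->
     forall u : R, 0 <= u -> Jalpha alpha u <= Jflat alpha u).
Proof.
split=> a a_lb a_ub u _; first exact: Jflat_le_Jalpha.
exact: Jalpha_le_Jflat.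
Qed.
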